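(* Let $k$ be an algebraically closed field of characteristic $0$, $R=k[x,y]$, and let $L=(x^d,x^{d-1}y^{a_1},\dots,xy^{a_{d-1}},y^{a_d})$ with $0=a_0<a_1<\dots<a_d$ be a lex-segment ideal, with $b_i=a_i-a_{i-1}$. If $b_2\ge b_3\ge\dots\ge b_d$, then $L^2=(x^d,x^{d-1}y^{a_1},y^{a_d})L$. In particular $\operatorname{depth}\operatorname{gr}_L(R)>0$.
   Context: $\operatorname{gr}_L(R)=\bigoplus_{n\ge0}L^n/L^{n+1}$. *)

From HB Require Import structures.
From mathcomp Require Import all_boot all_order all_algebra all_field.
From mathcomp Require Import mpoly.
Set Implicit Arguments. Unset Strict Implicit. Unset Printing Implicit Defensive.
Import GRing.Theory.
Local Open Scope ring_scope.

Section Ideals.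
Variable R : comNzRingType.

Definition gen_ideal (n : nat) (g : 'I_n -> R) : R -> Prop :=
  fun p => exists c : 'I_n -> R, p = \sum_(i < n) c i * g i.

Definition ideal_mul (I J : R -> Prop) : R -> Prop :=
  fun p => exists s : seq (R * R),
    (forall q, q \in s -> I q.1 /\ J q.2) /\ p = \sum_(q <- s) q.1 * q.2.

Fixpoint ideal_pow (I : R -> Prop) (n : nat) : R -> Prop :=
  match n with
  | 0 => fun _ => True
  | n'.+1 => ideal_mul (ideal_pow I n') I
  end.

Definition ideal_eq (I J : R -> Prop) : Prop := forall p, I p <-> J p.

(* Associated graded ring gr_I(R) = (+)_n I^n/I^(n+1).  An element is represented
   by a family f with f n in I^n (its degree-n component, taken mod I^(n+1)),
   with f n = 0 for n large. *)
Definition gr_elt (I : R -> Prop) (f : nat -> R) : Prop :=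
  (forall n, ideal_pow I n (f n)) /\ exists N, forall n, (N <= n)%N -> f n = 0.

Definition gr_zero (I : R -> Prop) (f : nat -> R) : Prop :=
  forall n, ideal_pow I n.+1 (f n).

Definition gr_mul (f g : nat -> R) : nat -> R :=
  fun n => \sum_(i < n.+1) f i * g (n - i)%N.

(* depth gr_I(R) > 0, where the depth is taken w.r.t. the homogeneous maximal
   ideal M = m/I (+) gr_I(R)_+ (m a maximal ideal of R containing I): M contains
   a nonzerodivisor of gr_I(R). *)
Definition gr_depth_pos (m I : R -> Prop) : Prop :=
  exists u, [/\ gr_elt I u, m (u 0%N) &
    forall z, gr_elt I z -> gr_zero I (gr_mul u z) -> gr_zero I z].

End Ideals.

Section LexSegment.
Variable k : fieldType.

Definition xv : {mpoly k[2]} := 'X_(ord0 : 'I_2).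
Definition yv : {mpoly k[2]} := 'X_(ord_max : 'I_2).

Definition max_xy : {mpoly k[2]} -> Prop :=
  gen_ideal (fun i : 'I_2 => if val i == 0%N then xv else yv).

Definition lexL (d : nat) (a : nat -> nat) : {mpoly k[2]} -> Prop :=
  gen_ideal (fun i : 'I_d.+1 => xv ^+ (d - i) * yv ^+ (a i)).

Definition J3 (d : nat) (a : nat -> nat) : {mpoly k[2]} -> Prop :=
  gen_ideal (fun i : 'I_3 =>
    nth 0 [:: xv ^+ d; xv ^+ (d.-1) * yv ^+ (a 1%N); yv ^+ (a d)] i).

End LexSegment.

From HB Require Import structures.
From mathcomp Require Import all_boot all_order all_algebra all_field.
From mathcomp Require Import mpoly.
From mathcomp Require Import zify.
From Stdlib Require Import Classical.
Set Implicit Arguments. Unset Strict Implicit. Unset Printing Implicit Defensive.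
Import GRing.Theory.
Local Open Scope ring_scope.

(* All ideals involved are monomial, so everything reduces to exponents.  The
   product of two generators x^(d-i) y^(a_i), x^(d-j) y^(a_j) of L is divisible
   by a generator of J = (x^d, x^(d-1) y^(a_1), y^(a_d)) times a generator of L:
   this is where the concavity b_2 >= ... >= b_d of the exponents enters.
   Hence L^(n+1) = J^n L for all n.
   For the depth, u = x^d + y^(a_d), placed in degree one, is a nonzerodivisor
   of gr_L(R).  If u z is in L^(n+2) but z is not in L^(n+1), let m_x and m_y be
   monomials of z outside J^n L with maximal x- and y-exponent respectively.
   Comparing coefficients, x^d m_x and y^(a_d) m_y lie in J^(n+1) L.  As the
   factor x^d (resp. y^(a_d)) cannot be split off, y^((n+1) a_1) divides m_x and
   x^((n+1)(d-1)) divides m_y, hence m_x by maximality; so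
   (x^(d-1) y^(a_1))^(n+1), a monomial of J^n L, divides m_x: a contradiction.
   Neither the characteristic nor algebraic closedness of k plays a role. *)

Section Ideals.
Variable R : comNzRingType.
Implicit Types (I J K : R -> Prop) (x y : R).

Definition is_ideal I :=
  [/\ I 0, forall x y, I x -> I y -> I (x + y) & forall r x, I x -> I (r * x)].

Lemma ideal_sum I (T : eqType) (r : seq T) (F : T -> R) :
  is_ideal I -> (forall t, t \in r -> I (F t)) -> I (\sum_(t <- r) F t).
Proof. by case=> I0 ID _ HF; rewrite big_seq; apply: big_ind. Qed.

Lemma gen_ideal_is_ideal n (g : 'I_n -> R) : is_ideal (gen_ideal g).
Proof.
split.
- by exists (fun _ => 0); rewrite big1 // => i _; rewrite mul0r.
- move=> _ _ [c ->] [c' ->]; exists (fun i => c i + c' i).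
  by rewrite -big_split; apply: eq_bigr => i _; rewrite mulrDl.
- move=> r _ [c ->]; exists (fun i => r * c i).
  by rewrite big_distrr; apply: eq_bigr => i _ /=; rewrite mulrA.
Qed.

Lemma gen_ideal_gen n (g : 'I_n -> R) i : gen_ideal g (g i).
Proof.
exists (fun j => (j == i)%:R); rewrite (bigD1 i) //= eqxx mul1r big1 ?addr0 //.
by move=> j /negbTE ->; rewrite mul0r.
Qed.

Lemma gen_ideal_min n (g : 'I_n -> R) I :
  is_ideal I -> (forall i, I (g i)) -> forall x, gen_ideal g x -> I x.
Proof.
by case=> I0 ID IM Hg _ [c ->]; apply: ideal_sum => // i _; apply: IM.
Qed.

Lemma ideal_mul_is_ideal I J : is_ideal I -> is_ideal (ideal_mul I J).
Proof.
case=> _ _ IM; split.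
- by exists [::]; rewrite big_nil.
- move=> _ _ [s [Hs ->]] [s' [Hs' ->]]; exists (s ++ s'); split.
    by move=> q; rewrite mem_cat => /orP [] ?; [apply: Hs | apply: Hs'].
  by rewrite big_cat.
- move=> r _ [s [Hs ->]]; exists [seq (r * q.1, q.2) | q <- s]; split.
    by move=> _ /mapP [q /Hs [Iq Jq] ->]; split => //; apply: IM.
  by rewrite big_map big_distrr; apply: eq_bigr => q _ /=; rewrite mulrA.
Qed.

Lemma ideal_mul_mem I J x y : I x -> J y -> ideal_mul I J (x * y).
Proof.
move=> Ix Jy; exists [:: (x, y)]; split; last by rewrite big_seq1.
by move=> q; rewrite mem_seq1 => /eqP ->.
Qed.

Lemma ideal_mul_min I J K : is_ideal K ->
  (forall x y, I x -> J y -> K (x * y)) -> forall x, ideal_mul I J x -> K x.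
Proof.
by move=> HK HIJ _ [s [Hs ->]]; apply: ideal_sum => // q /Hs [Iq Jq]; apply: HIJ.
Qed.

Lemma ideal_pow_is_ideal I n : is_ideal I -> is_ideal (ideal_pow I n).
Proof. by move=> HI; elim: n => [|n IH] /=; [split | apply: ideal_mul_is_ideal]. Qed.

Lemma ideal_pow1 I x : I x -> ideal_pow I 1 x.
Proof. by move=> Ix; rewrite -[x]mul1r; apply: ideal_mul_mem. Qed.

Lemma gr_mul_deg1 (u : R) (z : nat -> R) n :
  gr_mul (fun i => if i == 1%N then u else 0) z n.+1 = u * z n.
Proof.
rewrite /gr_mul (bigD1 (@Ordinal n.+2 1 isT)) //= subn1 big1 ?addr0 // => i.
by rewrite -val_eqE /= => /negbTE ->; rewrite mul0r.
Qed.

End Ideals.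

Section MonomialSupport.
Variables (n : nat) (R : comNzRingType).
Implicit Types (P S : 'X_{1..n} -> Prop) (f g : {mpoly R[n]}) (m e : 'X_{1..n}).

Definition msupp_in P f := forall m, m \in msupp f -> P m.

Definition up_closed P := forall m m', P m -> P (m' + m)%MM.

Lemma msupp_in0 P : msupp_in P 0.
Proof. by move=> m; rewrite msupp0. Qed.

Lemma msupp_inD P f g : msupp_in P f -> msupp_in P g -> msupp_in P (f + g).
Proof. by move=> Hf Hg m /msuppD_le; rewrite mem_cat => /orP []; [apply: Hf | apply: Hg]. Qed.

Lemma msupp_inZ P c f : msupp_in P f -> msupp_in P (c *: f).
Proof. by move=> Hf m /msuppZ_le; apply: Hf. Qed.

Lemma msupp_inX P m : P m -> msupp_in P 'X_[m].
Proof. by move=> Pm m'; rewrite msuppX mem_seq1 => /eqP ->. Qed.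

Lemma msupp_in_sum P (T : eqType) (r : seq T) (F : T -> {mpoly R[n]}) :
  (forall t, t \in r -> msupp_in P (F t)) -> msupp_in P (\sum_(t <- r) F t).
Proof.
move=> HF; rewrite big_seq; apply: (big_ind (msupp_in P)) => //.
- exact: msupp_in0.
- exact: msupp_inD.
Qed.

Lemma msupp_in_mul P P' S f g :
  msupp_in P f -> msupp_in P' g -> (forall m m', P m -> P' m' -> S (m + m')%MM) ->
  msupp_in S (f * g).
Proof.
move=> Hf Hg HS; rewrite [g]mpolyE mulr_sumr; apply: msupp_in_sum => m' m'g.
rewrite -scalerAr; apply: msupp_inZ => m0.
rewrite (perm_mem (msuppMX _ _)) => /mapP [m mf ->].
by rewrite addmC; apply: HS; [apply: Hf | apply: Hg].
Qed.

Lemma msupp_in_ideal P : up_closed P -> is_ideal (msupp_in P).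
Proof.
move=> HP; split; [exact: msupp_in0 | exact: msupp_inD |].
move=> r f Hf; apply: (msupp_in_mul (P := fun _ => True)) Hf _ => // m m' _.
exact: HP.
Qed.

Lemma msupp_in_coef P f m : msupp_in P f -> ~ P m -> f@_m = 0.
Proof. by move=> Hf Pm; apply/eqP; rewrite mcoeff_eq0; apply/negP => /Hf. Qed.

Lemma not_msupp_in P f : ~ msupp_in P f -> exists2 m, m \in msupp f & ~ P m.
Proof.
move=> nHf; apply: NNPP => nex; apply: nHf => m mf.
by apply: NNPP => nPm; apply: nex; exists m.
Qed.

Lemma ideal_msupp_in (I : {mpoly R[n]} -> Prop) P f :
  is_ideal I -> (forall m, P m -> I 'X_[m]) -> msupp_in P f -> I f.
Proof.
move=> HI HX Hf; rewrite [f]mpolyE; apply: ideal_sum => // m /Hf /HX Xm.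
by rewrite -mul_mpolyC; case: HI => _ _; apply.
Qed.

Lemma ideal_mpolyX_le (I : {mpoly R[n]} -> Prop) m m' :
  is_ideal I -> I 'X_[m] -> (m <= m')%MM -> I 'X_[m'].
Proof. by case=> _ _ IM Xm /submK <-; rewrite mpolyXD; apply: IM. Qed.

(* The coefficient of X^(e + m) in (X^e + X^e') f is f_m, unless
   e + m = e' + m' for some m' in the support of f. *)
Lemma msupp_in_binomial_mul S e e' m f :
  msupp_in S (('X_[e] + 'X_[e']) * f) -> m \in msupp f ->
  (forall m', m' \in msupp f -> (e + m = e' + m')%MM -> S (e + m)%MM) ->
  S (e + m)%MM.
Proof.
move=> HS mf collision; apply: NNPP => nS.
have := msupp_in_coef HS nS; rewrite mulrDl mcoeffD [_ * f]mulrC mcoeffMX.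
suff -> : ('X_[e'] * f)@_(e + m) = 0 by rewrite addr0 => /eqP; rewrite mcoeff_eq0 mf.
apply/eqP; rewrite mcoeff_eq0 mulrC (perm_mem (msuppMX _ _)).
by apply/negP => /mapP [m' m'f E]; apply/nS/(collision m' m'f E).
Qed.

End MonomialSupport.

Lemma ex_argmax_seq (T : eqType) (s : seq T) (B : T -> Prop) (f : T -> nat) :
  (exists2 x, x \in s & B x) ->
  exists x, [/\ x \in s, B x & forall y, y \in s -> B y -> (f y <= f x)%N].
Proof.
elim: s => [|t s IH] ex; first by case: ex.
have [[x xs Bx]|nex] := classic (exists2 x, x \in s & B x).
  have [y [ys By ymax]] := IH (ex_intro2 _ _ x xs Bx).
  have [[Bt lt_yt]|nt] := classic (B t /\ (f y < f t)%N).
    exists t; split; rewrite ?mem_head // => z.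
    by rewrite inE => /orP [/eqP -> //|zs /(ymax _ zs)]; lia.
  exists y; split; rewrite ?inE ?ys ?orbT // => z.
  rewrite inE => /orP [/eqP -> Bt|]; last exact: ymax.
  by rewrite leqNgt; apply/negP => lt_yt; apply: nt.
have Bt : B t.
  by case: ex => x; rewrite inE => /orP [/eqP -> //|xs Bx]; case: nex; exists x.
exists t; split; rewrite ?mem_head // => z.
by rewrite inE => /orP [/eqP -> //|zs Bz]; case: nex; exists z.
Qed.

Definition mnm2 (p q : nat) : 'X_{1..2} :=
  [multinom (if val i == 0%N then p else q) | i < 2].

Lemma mnm2E0 p q : mnm2 p q ord0 = p.
Proof. by rewrite mnmE. Qed.

Lemma mnm2E1 p q : mnm2 p q ord_max = q.
Proof. by rewrite mnmE. Qed.

Lemma ord2P (i : 'I_2) : i = ord0 \/ i = ord_max.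
Proof. by case: i => [[|[|//]] Hi]; [left|right]; apply: val_inj. Qed.

Lemma mnm2D p q p' q' : (mnm2 p q + mnm2 p' q')%MM = mnm2 (p + p') (q + q').
Proof. by apply/mnmP => i; rewrite mnmDE !mnmE; case: ifP. Qed.

Lemma mnm2_le p q (m : 'X_{1..2}) :
  (mnm2 p q <= m)%MM = (p <= m ord0)%N && (q <= m ord_max)%N.
Proof.
apply/mnm_lepP/andP => [H|[hp hq] i].
  by split; [have := H ord0 | have := H ord_max]; rewrite ?mnm2E0 ?mnm2E1.
by case: (ord2P i) => ->; rewrite ?mnm2E0 ?mnm2E1.
Qed.

Lemma xv_yv_mnm2 (k : fieldType) p q : xv k ^+ p * yv k ^+ q = 'X_[mnm2 p q].
Proof.
rewrite /xv /yv !mpolyXn -mpolyXD; congr 'X_[_]; apply/mnmP => i.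
rewrite mnmDE !mulmnE !mnm1E mnmE; case: (ord2P i) => -> /=.
all: by rewrite ?mul0n ?addn0 ?mul1n ?muln1 ?add0n.
Qed.

Section LexSegment.
Variables (d : nat) (a : nat -> nat).
Hypothesis d_gt0 : (0 < d)%N.
Hypothesis a0 : a 0%N = 0%N.
Hypothesis a_incr : forall i, (i < d)%N -> (a i < a i.+1)%N.
Hypothesis gap_decr :
  forall i, (2 <= i)%N -> (i < d)%N -> (a i.+1 - a i <= a i - a i.-1)%N.

Section Exponents.
Local Open Scope nat_scope.

Lemma a_addn i k : i + k <= d -> a i + k <= a (i + k).
Proof.
elim: k => [|k IH] ikd; first by rewrite !addn0.
have := IH ltac:(lia); have := a_incr (i := i + k) ltac:(lia).
rewrite !addnS; lia.
Qed.

Lemma a1_le_ad : a 1 <= a d.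
Proof.
have := @a_addn 1 (d - 1) ltac:(lia).
have -> : 1 + (d - 1) = d by lia.
lia.
Qed.

Lemma ad_gt0 : 0 < a d.
Proof. by have := @a_addn 0 d ltac:(lia); rewrite a0 add0n; lia. Qed.

Lemma gap_antimono u k : 2 <= u -> u + k <= d ->
  a (u + k) - a (u + k).-1 <= a u - a u.-1.
Proof.
move=> u_ge2; elim: k => [|k IH] ukd; first by rewrite addn0.
have := IH ltac:(lia); have := gap_decr (i := u + k) ltac:(lia) ltac:(lia).
rewrite !addnS /=; lia.
Qed.

Lemma a_exchange k s t : 1 <= s -> s <= t -> t + k <= d ->
  a (t + k) + a s <= a (s + k) + a t.
Proof.
move=> s_gt0 st; elim: k => [|k IH] tkd; first by rewrite !addn0 addnC.
have := IH ltac:(lia).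
have := @gap_antimono (s + k).+1 (t - s) ltac:(lia) ltac:(lia).
have -> : (s + k).+1 + (t - s) = (t + k).+1 by lia.
have := a_incr (i := t + k) ltac:(lia); have := a_incr (i := s + k) ltac:(lia).
rewrite !addnS /=; lia.
Qed.

Definition L_exp p q := exists2 i, i <= d & p = d - i /\ q = a i.

Definition J_exp p q :=
  [\/ p = d /\ q = 0, p = d - 1 /\ q = a 1 | p = 0 /\ q = a d].

Fixpoint JnL_exp n p q : Prop :=
  match n with
  | 0 => L_exp p q
  | n.+1 => exists p1 q1 p2 q2,
      [/\ J_exp p1 q1, JnL_exp n p2 q2, p = p1 + p2 & q = q1 + q2]
  end.

Lemma JnL_exp_step n p1 q1 p2 q2 :
  J_exp p1 q1 -> JnL_exp n p2 q2 -> JnL_exp n.+1 (p1 + p2) (q1 + q2).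
Proof. by move=> HJ HQ; exists p1, q1, p2, q2. Qed.

Lemma J_exp_L p q : J_exp p q -> L_exp p q.
Proof.
by case=> [[-> ->]|[-> ->]|[-> ->]]; [exists 0 | exists 1 | exists d];
  rewrite ?subn0 ?subnn ?a0.
Qed.

Lemma J_exp_x p q : J_exp p q -> p = d /\ q = 0 \/ a 1 <= q.
Proof.
move=> HJ; have := a1_le_ad.
by case: HJ => [[-> ->]|[-> ->]|[-> ->]] ad1; [left | right..].
Qed.

Lemma J_exp_y p q : J_exp p q -> q = a d /\ p = 0 \/ d - 1 <= p.
Proof. by case=> [[-> ->]|[-> ->]|[-> ->]]; [right; lia | right | left]. Qed.

Lemma L_exp_mul p q p' q' : L_exp p q -> L_exp p' q' ->
  exists p'' q'', [/\ JnL_exp 1 p'' q'', p'' <= p + p' & q'' <= q + q'].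
Proof.
case=> i id [-> ->] [j jd [-> ->]].
wlog ij : i j id jd / i <= j.
  move=> W; case: (leqP i j) => [|/ltnW ji]; first exact: W.
  by have [p'' [q'' [? ? ?]]] := W j i jd id ji; exists p'', q''; split => //; lia.
have mulJ p1 q1 l : J_exp p1 q1 -> l <= d -> JnL_exp 1 (p1 + (d - l)) (q1 + a l).
  by move=> HJ ld; apply: JnL_exp_step HJ _; exists l.
have ad1 := a1_le_ad.
case: (posnP i) => [i0|i_gt0].
  exists (d + (d - j)), (0 + a j); rewrite i0 a0; split; try lia.
  by apply: mulJ jd; constructor 1.
case: (eqVneq i 1) => [i1|i_neq1].
  exists (d - 1 + (d - j)), (a 1 + a j); rewrite i1; split; try lia.
  by apply: mulJ jd; constructor 2.
case: (eqVneq j d) => [jd'|j_neqd].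
  exists (0 + (d - i)), (a d + a i); rewrite jd'; split; try lia.
  by apply: mulJ id; constructor 3.
case: (leqP (i + j - 1) d) => ijd.
  exists (d - 1 + (d - (i + j - 1))), (a 1 + a (i + j - 1)); split; try lia.
    by apply: mulJ ijd; constructor 2.
  have := @a_exchange (i - 1) 1 j ltac:(lia) ltac:(lia) ltac:(lia).
  have -> : j + (i - 1) = i + j - 1 by lia.
  have -> : 1 + (i - 1) = i by lia.
  lia.
exists (0 + (d - (i + j - d))), (a d + a (i + j - d)); split; try lia.
  by apply: mulJ; [constructor 3 | lia].
have := @a_exchange (d - j) (i + j - d) j ltac:(lia) ltac:(lia) ltac:(lia).
have -> : j + (d - j) = d by lia.
have -> : i + j - d + (d - j) = i by lia.
lia.
Qed.

Lemma JnL_exp_mulL n p q p' q' : JnL_exp n p q -> L_exp p' q' ->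
  exists p'' q'', [/\ JnL_exp n.+1 p'' q'', p'' <= p + p' & q'' <= q + q'].
Proof.
elim: n p q => [|n IH] p q; first exact: L_exp_mul.
case=> p1 [q1 [p2 [q2 [HJ HQ -> ->]]]] HL.
have [p'' [q'' [HQ' hp hq]]] := IH _ _ HQ HL.
by exists (p1 + p''), (q1 + q''); split; [apply: JnL_exp_step | lia | lia].
Qed.

Lemma JnL_exp_split_x n p q : JnL_exp n.+1 p q ->
  (exists2 p', JnL_exp n p' q & p = d + p') \/ a 1 * n.+1 <= q.
Proof.
elim: n p q => [|n IH] p q [p1 [q1 [p2 [q2 [HJ HQ -> ->]]]]];
  (case: (J_exp_x HJ) => [[-> ->]|q1_ge]; first by left; exists p2).
  by right; lia.
case: (IH _ _ HQ) => [[p' HQ' ->]|q2_ge]; last by right; rewrite mulnS; lia.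
by left; exists (p1 + p'); [apply: JnL_exp_step | lia].
Qed.

Lemma JnL_exp_split_y n p q : JnL_exp n.+1 p q ->
  (exists2 q', JnL_exp n p q' & q = a d + q') \/ (d - 1) * n.+1 <= p.
Proof.
elim: n p q => [|n IH] p q [p1 [q1 [p2 [q2 [HJ HQ -> ->]]]]];
  (case: (J_exp_y HJ) => [[-> ->]|p1_ge]; first by left; exists q2).
  by right; lia.
case: (IH _ _ HQ) => [[q' HQ' ->]|p2_ge]; last by right; rewrite mulnS; lia.
by left; exists (q1 + q'); [apply: JnL_exp_step | lia].
Qed.

Lemma JnL_exp_diag n : JnL_exp n ((d - 1) * n.+1) (a 1 * n.+1).
Proof.
elim: n => [|n IH]; first by exists 1; rewrite ?muln1.
by rewrite mulnS [a 1 * _]mulnS; apply: JnL_exp_step IH; constructor 2.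
Qed.

End Exponents.

Section Polynomials.
Variable k : fieldType.
Local Notation L := (@lexL k d a).
Local Notation J := (@J3 k d a).

Definition JnL_mnm n (m : 'X_{1..2}) :=
  exists p q, [/\ JnL_exp n p q, (p <= m ord0)%N & (q <= m ord_max)%N].

Lemma JnL_mnm_up n : up_closed (JnL_mnm n).
Proof. by move=> m m' [p [q [HQ hp hq]]]; exists p, q; rewrite !mnmDE; split => //; lia. Qed.

Lemma JnL_mnm_mulJ n p q m :
  J_exp p q -> JnL_mnm n m -> JnL_mnm n.+1 (mnm2 p q + m).
Proof.
move=> HJ [p' [q' [HQ hp hq]]]; exists (p + p'), (q + q').
by rewrite !mnmDE mnm2E0 mnm2E1; split; [apply: JnL_exp_step | lia | lia].
Qed.

Lemma JnL_mnm_mulL n m m' : JnL_mnm n m -> JnL_mnm 0 m' -> JnL_mnm n.+1 (m + m').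
Proof.
move=> [p [q [HQ hp hq]]] [p' [q' [HL hp' hq']]].
have [p'' [q'' [HQ' hp'' hq'']]] := JnL_exp_mulL HQ HL.
by exists p'', q''; rewrite !mnmDE; split => //; lia.
Qed.

Lemma JnL_mnm_mulx n m :
  JnL_mnm n.+1 (mnm2 d 0 + m) -> JnL_mnm n m \/ (a 1 * n.+1 <= m ord_max)%N.
Proof.
case=> p [q [HQ]]; rewrite !mnmDE mnm2E0 mnm2E1 => hp hq.
case: (JnL_exp_split_x HQ) => [[p' HQ' Ep]|]; last by right; lia.
by left; exists p', q; split => //; lia.
Qed.

Lemma JnL_mnm_muly n m :
  JnL_mnm n.+1 (mnm2 0 (a d) + m) -> JnL_mnm n m \/ ((d - 1) * n.+1 <= m ord0)%N.
Proof.
case=> p [q [HQ]]; rewrite !mnmDE mnm2E0 mnm2E1 => hp hq.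
case: (JnL_exp_split_y HQ) => [[q' HQ' Eq]|]; last by right; lia.
by left; exists p, q'; split => //; lia.
Qed.

Lemma lexL_ideal : is_ideal L.
Proof. exact: gen_ideal_is_ideal. Qed.

Lemma lexL_mnm p q : L_exp p q -> L 'X_[mnm2 p q].
Proof.
case=> i id [-> ->]; rewrite -xv_yv_mnm2 /lexL.
exact: (gen_ideal_gen _ (@Ordinal d.+1 i id)).
Qed.

Lemma J3_mnm p q : J_exp p q -> J 'X_[mnm2 p q].
Proof.
rewrite -xv_yv_mnm2 /J3; case=> [[-> ->]|[-> ->]|[-> ->]].
- by rewrite expr0 mulr1; apply: (gen_ideal_gen _ (@Ordinal 3 0 isT)).
- by rewrite -subn1; apply: (gen_ideal_gen _ (@Ordinal 3 1 isT)).
- by rewrite expr0 mul1r; apply: (gen_ideal_gen _ (@Ordinal 3 2 isT)).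
Qed.

Lemma J3_sub_lexL f : J f -> L f.
Proof.
rewrite /J3; apply: gen_ideal_min; first exact: lexL_ideal.
move=> [[|[|[|//]]] i3] /=.
- by rewrite -[xv k ^+ d]mulr1 -(expr0 (yv k)) xv_yv_mnm2; apply/lexL_mnm/J_exp_L; constructor 1.
- by rewrite xv_yv_mnm2 -subn1; apply/lexL_mnm/J_exp_L; constructor 2.
- by rewrite -[yv k ^+ _]mul1r -(expr0 (xv k)) xv_yv_mnm2; apply/lexL_mnm/J_exp_L; constructor 3.
Qed.

Lemma JnL_exp_pow n p q : JnL_exp n p q -> ideal_pow L n.+1 'X_[mnm2 p q].
Proof.
elim: n p q => [|n IH] p q; first by move=> HL; apply/ideal_pow1/lexL_mnm.
case=> p1 [q1 [p2 [q2 [HJ HQ -> ->]]]].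
rewrite -mnm2D mpolyXD mulrC; apply: ideal_mul_mem; first exact: IH.
exact/lexL_mnm/J_exp_L.
Qed.

Lemma lexL_msupp f : L f -> msupp_in (JnL_mnm 0) f.
Proof.
apply: gen_ideal_min; first exact/msupp_in_ideal/JnL_mnm_up.
move=> i; rewrite xv_yv_mnm2; apply: msupp_inX.
by exists (d - i)%N, (a i); rewrite mnm2E0 mnm2E1; split => //; exists i; rewrite // -ltnS.
Qed.

Lemma lexL_pow_mnm n : ideal_eq (ideal_pow L n.+1) (msupp_in (JnL_mnm n)).
Proof.
move=> f; split.
  elim: n f => [|n IH] f /=; apply: ideal_mul_min; try exact/msupp_in_ideal/JnL_mnm_up.
    by move=> x y _ /lexL_msupp Hy; case: (msupp_in_ideal k (@JnL_mnm_up 0)) => _ _ IM; apply: IM.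
  move=> x y /IH Hx /lexL_msupp Hy; apply: msupp_in_mul Hx Hy _.
  exact: JnL_mnm_mulL.
have HI := ideal_pow_is_ideal n.+1 lexL_ideal.
apply: (ideal_msupp_in HI) => m [p [q [HQ hp hq]]].
by apply: ideal_mpolyX_le HI (JnL_exp_pow HQ) _; rewrite mnm2_le hp hq.
Qed.

Lemma lexL_sqr : ideal_eq (ideal_pow L 2) (ideal_mul J L).
Proof.
move=> f; split.
  move/(lexL_pow_mnm 1); apply: ideal_msupp_in.
    exact/ideal_mul_is_ideal/gen_ideal_is_ideal.
  move=> m [_ [_ [[p1 [q1 [p2 [q2 [HJ HL -> ->]]]]] hp hq]]].
  apply: (@ideal_mpolyX_le _ _ _ (mnm2 (p1 + p2) (q1 + q2))).
  - exact/ideal_mul_is_ideal/gen_ideal_is_ideal.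
  - by rewrite -mnm2D mpolyXD; apply: ideal_mul_mem; [apply: J3_mnm | apply: lexL_mnm].
  - by rewrite mnm2_le hp hq.
apply: ideal_mul_min; first exact: ideal_pow_is_ideal lexL_ideal.
by move=> x y /J3_sub_lexL Jx Ly; apply: ideal_mul_mem Ly; apply: ideal_pow1.
Qed.

Lemma lexL_pow_mul_xdyad n (z : {mpoly k[2]}) :
  ideal_pow L n.+2 (('X_[mnm2 d 0] + 'X_[mnm2 0 (a d)]) * z) ->
  ideal_pow L n.+1 z.
Proof.
move=> /(lexL_pow_mnm n.+1 _).1 Huz; apply/(lexL_pow_mnm n _).2.
apply: NNPP => /not_msupp_in ex_bad.
have [mx [mx_z mx_bad mx_max]] := ex_argmax_seq (fun m : 'X_{1..2} => m ord0) ex_bad.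
have [my [my_z my_bad my_max]] := ex_argmax_seq (fun m : 'X_{1..2} => m ord_max) ex_bad.
have Hx : JnL_mnm n.+1 (mnm2 d 0 + mx).
  apply: msupp_in_binomial_mul Huz mx_z _ => m' m'_z E.
  have m'_good : JnL_mnm n m'.
    apply: NNPP => m'_bad; have := mx_max m' m'_z m'_bad.
    by have := congr1 (fun m : 'X_{1..2} => m ord0) E; rewrite /= !mnmDE !mnm2E0; lia.
  by rewrite E; apply: JnL_mnm_mulJ m'_good; constructor 3.
have Hy : JnL_mnm n.+1 (mnm2 0 (a d) + my).
  move: Huz; rewrite addrC => Huz.
  apply: msupp_in_binomial_mul Huz my_z _ => m' m'_z E.
  have m'_good : JnL_mnm n m'.
    apply: NNPP => m'_bad; have := my_max m' m'_z m'_bad; have := ad_gt0.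
    by have := congr1 (fun m : 'X_{1..2} => m ord_max) E; rewrite /= !mnmDE !mnm2E1; lia.
  by rewrite E; apply: JnL_mnm_mulJ m'_good; constructor 1.
have [//|mx_y] := JnL_mnm_mulx Hx.
have [//|my_x] := JnL_mnm_muly Hy.
apply: mx_bad; exists ((d - 1) * n.+1)%N, (a 1 * n.+1)%N; split=> //.
- exact: JnL_exp_diag.
- by have := mx_max my my_z my_bad; lia.
Qed.

Lemma lexL_gr_depth_pos : gr_depth_pos (@max_xy k) L.
Proof.
pose u : {mpoly k[2]} := 'X_[mnm2 d 0] + 'X_[mnm2 0 (a d)].
have L_u : L u.
  case: lexL_ideal => _ LD _.
  by apply: LD; apply/lexL_mnm/J_exp_L; [constructor 1 | constructor 3].
exists (fun i => if i == 1%N then u else 0); split.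
- split; last by exists 2%N => -[|[|]].
  case=> [|[|i]] //=; first exact: ideal_pow1.
  by case: (ideal_pow_is_ideal i.+2 lexL_ideal).
- by case: (gen_ideal_is_ideal (fun i : 'I_2 => if val i == 0%N then xv k else yv k)).
- move=> z _ Huz n; apply: lexL_pow_mul_xdyad.
  by have := Huz n.+1; rewrite gr_mul_deg1.
Qed.

End Polynomials.
End LexSegment.

Theorem proposition4p2 (k : closedFieldType) (d : nat) (a : nat -> nat) :
  [pchar k] =i pred0 ->
  (1 <= d)%N ->
  a 0%N = 0%N ->
  (forall i, (i < d)%N -> (a i < a i.+1)%N) ->
  (forall i, (2 <= i)%N -> (i < d)%N -> (a i.+1 - a i <= a i - a i.-1)%N) ->
  ideal_eq (ideal_pow (@lexL k d a) 2) (ideal_mul (@J3 k d a) (@lexL k d a)) /\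
  gr_depth_pos (@max_xy k) (@lexL k d a).
Proof.
move=> _ d_gt0 a0 a_incr gap_decr.
by split; [apply: lexL_sqr | apply: lexL_gr_depth_pos].
Qed.
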